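(* Let $S=(X,\cdot)$ be a semigroup and $\Phi$ a tight twisting of $S$, and let $T_\Phi^0$ be the associated $0$-twisted semigroup. Then for all $a,b\in X$ and all $\xi\in\{\mathcal{R},\mathcal{L},\mathcal{D},\mathcal{J},\mathcal{H},\leq_{\mathcal{R}},\leq_{\mathcal{L}},\leq_{\mathcal{J}}\}$ we have $a\mathrel{\xi^{T_\Phi^0}}b \iff a\mathrel{\xi^{S}}b$.
   Context: Green's relations and the preorders $\leq_{\mathcal{R}},\leq_{\mathcal{L}},\leq_{\mathcal{J}}$ are the standard ones (defined using the semigroup with an identity adjoined); a superscript indicates the semigroup in which they are computed. $\mathbb{N}=\{0,1,2,\dots\}$. A twisting of a semigroup $S$ is a map $\Phi:S\times S\to\mathbb{N}$ with $\Phi(a,b)+\Phi(ab,c)=\Phi(a,bc)+\Phi(b,c)$ for all $a,b,c\in S$. It is tight if (1) for all $a,b\in S$ there is $a'\in S$ with $ab=a'b$ and $\Phi(a',b)=0$, and (2) for all $a,b\in S$ there is $b'\in S$ with $ab=ab'$ and $\Phi(a,b')=0$. For $S=(X,\cdot)$ with twisting $\Phi$, the $0$-twisted semigroup is $T_\Phi^0=(X\sqcup\{0\},* )$ where $a*b=ab$ if $a,b\neq0$ and $\Phi(a,b)=0$, and $a*b=0$ otherwise. *)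

From Stdlib Require Import Arith.

(* Green's preorders and relations of a magma (M, op), computed in M^1
   (identity adjoined): s ∈ M^1 is modelled by "s absent" or "s ∈ M". *)
Section Green.
Variables (M : Type) (op : M -> M -> M).

Definition leR (a b : M) : Prop := a = b \/ exists s, a = op b s.
Definition leL (a b : M) : Prop := a = b \/ exists s, a = op s b.
Definition leJ (a b : M) : Prop :=
  a = b \/ (exists s, a = op s b) \/ (exists t, a = op b t)
        \/ (exists s t, a = op (op s b) t).
Definition greenR (a b : M) : Prop := leR a b /\ leR b a.
Definition greenL (a b : M) : Prop := leL a b /\ leL b a.
Definition greenJ (a b : M) : Prop := leJ a b /\ leJ b a.
Definition greenH (a b : M) : Prop := greenR a b /\ greenL a b.
Definition greenD (a b : M) : Prop := exists c, greenR a c /\ greenL c b.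
End Green.

Inductive green_kind := gR | gL | gD | gJ | gH | gleR | gleL | gleJ.

Definition green_rel (k : green_kind) (M : Type) (op : M -> M -> M)
  : M -> M -> Prop :=
  match k with
  | gR => @greenR M op | gL => @greenL M op | gD => @greenD M op
  | gJ => @greenJ M op | gH => @greenH M op
  | gleR => @leR M op | gleL => @leL M op | gleJ => @leJ M op
  end.

Definition associative_op {X : Type} (mul : X -> X -> X) : Prop :=
  forall a b c, mul (mul a b) c = mul a (mul b c).

Definition is_twisting {X : Type} (mul : X -> X -> X) (Phi : X -> X -> nat)
  : Prop :=
  forall a b c, Phi a b + Phi (mul a b) c = Phi a (mul b c) + Phi b c.

Definition is_tight {X : Type} (mul : X -> X -> X) (Phi : X -> X -> nat)
  : Prop :=
  (forall a b, exists a', mul a b = mul a' b /\ Phi a' b = 0) /\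
  (forall a b, exists b', mul a b = mul a b' /\ Phi a b' = 0).

(* The 0-twisted semigroup T^0_Phi on X ⊔ {0}; None plays the role of 0. *)
Definition twisted0_mul {X : Type} (mul : X -> X -> X) (Phi : X -> X -> nat)
  (x y : option X) : option X :=
  match x, y with
  | Some a, Some b => if Nat.eqb (Phi a b) 0 then Some (mul a b) else None
  | _, _ => None
  end.

(* Every nonzero product in T^0_Phi is a product in S, and conversely, by
   tightness, every product ab in S can be realised in T^0_Phi by changing one
   factor (a to a', or b to b') without changing the product.  Hence the
   one-sided divisibility preorders <=_R, <=_L, <=_J agree on X in S and in
   T^0_Phi; the equivalences R, L, J, H follow, and so does D, since 0 is not
   R-related to any nonzero element.  Associativity and the twisting identity
   only make T^0_Phi a semigroup; the comparison itself uses tightness alone. *)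
From Stdlib Require Import Arith.

Section TwistedSemigroup.
Variables (X : Type) (mul : X -> X -> X) (Phi : X -> X -> nat).
Local Notation tmul := (twisted0_mul mul Phi).

Lemma twisted0_mul_Some_inv x y z :
  tmul x y = Some z -> exists a b, x = Some a /\ y = Some b /\ z = mul a b.
Proof.
  destruct x as [a|], y as [b|]; simpl; try discriminate.
  destruct (Nat.eqb (Phi a b) 0); intro E; [injection E | discriminate].
  intros <-; eauto.
Qed.

Lemma twisted0_mul_Some a b : Phi a b = 0 -> tmul (Some a) (Some b) = Some (mul a b).
Proof. intro H; simpl; rewrite H; reflexivity. Qed.

Lemma leR_twisted0_None a : ~ leR (option X) tmul (Some a) None.
Proof. intros [E | [s E]]; [discriminate | destruct s; discriminate]. Qed.

Hypothesis Htight : is_tight mul Phi.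

Lemma twisted0_mul_realize_l a b : exists a', tmul (Some a') (Some b) = Some (mul a b).
Proof.
  destruct (proj1 Htight a b) as (a' & -> & H0).
  exists a'; exact (twisted0_mul_Some _ _ H0).
Qed.

Lemma twisted0_mul_realize_r a b : exists b', tmul (Some a) (Some b') = Some (mul a b).
Proof.
  destruct (proj2 Htight a b) as (b' & -> & H0).
  exists b'; exact (twisted0_mul_Some _ _ H0).
Qed.

Lemma leR_twisted0 a b : leR (option X) tmul (Some a) (Some b) <-> leR X mul a b.
Proof.
  split.
  - intros [E | [s E]]; [left; congruence |].
    symmetry in E; destruct (twisted0_mul_Some_inv _ _ _ E) as (b' & s' & Eb & _ & ->).
    injection Eb as <-; right; eauto.
  - intros [-> | [s ->]]; [now left |].
    destruct (twisted0_mul_realize_r b s) as (s' & E).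
    right; exists (Some s'); now rewrite E.
Qed.

Lemma leL_twisted0 a b : leL (option X) tmul (Some a) (Some b) <-> leL X mul a b.
Proof.
  split.
  - intros [E | [s E]]; [left; congruence |].
    symmetry in E; destruct (twisted0_mul_Some_inv _ _ _ E) as (s' & b' & _ & Eb & ->).
    injection Eb as <-; right; eauto.
  - intros [-> | [s ->]]; [now left |].
    destruct (twisted0_mul_realize_l s b) as (s' & E).
    right; exists (Some s'); now rewrite E.
Qed.

Lemma leJ_twisted0 a b : leJ (option X) tmul (Some a) (Some b) <-> leJ X mul a b.
Proof.
  split.
  - intros [E | [[s E] | [[t E] | (s & t & E)]]]; symmetry in E;
      try (left; congruence).
    + destruct (twisted0_mul_Some_inv _ _ _ E) as (s' & b' & _ & Eb & ->).
      injection Eb as <-; right; left; eauto.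
    + destruct (twisted0_mul_Some_inv _ _ _ E) as (b' & t' & Eb & _ & ->).
      injection Eb as <-; right; right; left; eauto.
    + destruct (twisted0_mul_Some_inv _ _ _ E) as (sb & t' & Esb & _ & ->).
      destruct (twisted0_mul_Some_inv _ _ _ Esb) as (s' & b' & _ & Eb & ->).
      injection Eb as <-; right; right; right; eauto.
  - intros [-> | [[s ->] | [[t ->] | (s & t & ->)]]]; [now left | | |].
    + destruct (twisted0_mul_realize_l s b) as (s' & E).
      right; left; exists (Some s'); now rewrite E.
    + destruct (twisted0_mul_realize_r b t) as (t' & E).
      right; right; left; exists (Some t'); now rewrite E.
    + destruct (twisted0_mul_realize_l s b) as (s' & Esb).
      destruct (twisted0_mul_realize_r (mul s b) t) as (t' & Et).
      right; right; right; exists (Some s'), (Some t'); now rewrite Esb, Et.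
Qed.

Lemma greenR_twisted0 a b : greenR (option X) tmul (Some a) (Some b) <-> greenR X mul a b.
Proof. unfold greenR; now rewrite !leR_twisted0. Qed.

Lemma greenL_twisted0 a b : greenL (option X) tmul (Some a) (Some b) <-> greenL X mul a b.
Proof. unfold greenL; now rewrite !leL_twisted0. Qed.

Lemma greenJ_twisted0 a b : greenJ (option X) tmul (Some a) (Some b) <-> greenJ X mul a b.
Proof. unfold greenJ; now rewrite !leJ_twisted0. Qed.

Lemma greenH_twisted0 a b : greenH (option X) tmul (Some a) (Some b) <-> greenH X mul a b.
Proof. unfold greenH; now rewrite greenR_twisted0, greenL_twisted0. Qed.

Lemma greenD_twisted0 a b : greenD (option X) tmul (Some a) (Some b) <-> greenD X mul a b.
Proof.
  split.
  - intros ([c |] & HR & HL).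
    + exists c; now rewrite <- greenR_twisted0, <- greenL_twisted0.
    + exfalso; exact (leR_twisted0_None a (proj1 HR)).
  - intros (c & HR & HL); exists (Some c).
    now rewrite greenR_twisted0, greenL_twisted0.
Qed.

End TwistedSemigroup.

Theorem mainTheorem2 (X : Type) (mul : X -> X -> X) (Phi : X -> X -> nat)
  (Hassoc : associative_op mul) (Htw : is_twisting mul Phi)
  (Htight : is_tight mul Phi) :
  forall (a b : X) (xi : green_kind),
    @green_rel xi (option X) (twisted0_mul mul Phi) (Some a) (Some b) <->
    @green_rel xi X mul a b.
Proof.
  intros a b []; simpl.
  - exact (greenR_twisted0 X mul Phi Htight a b).
  - exact (greenL_twisted0 X mul Phi Htight a b).
  - exact (greenD_twisted0 X mul Phi Htight a b).
  - exact (greenJ_twisted0 X mul Phi Htight a b).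
  - exact (greenH_twisted0 X mul Phi Htight a b).
  - exact (leR_twisted0 X mul Phi Htight a b).
  - exact (leL_twisted0 X mul Phi Htight a b).
  - exact (leJ_twisted0 X mul Phi Htight a b).
Qed.
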